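(* Every countable group $G$ is poly-MT; that is, for every finite $F\subseteq G$ there is a fair polytile $(T_1,\dots,T_k)$ of $G$ with $F\subseteq T_1$.
   Context: For a countable group $G$, a tuple $(T_1,\dots,T_k)$ of finite subsets of $G$, each containing $1_G$, is a polytile if there are non-empty sets $\Delta_1,\dots,\Delta_k\subseteq G$ such that $G$ is the disjoint union $\coprod_{1\le i\le k,\ \delta\in\Delta_i}\delta T_i$. It is fair if all $T_i$ have the same cardinality. *)

From mathcomp Require Import all_boot.
From mathcomp Require Import finmap.
Set Implicit Arguments. Unset Strict Implicit. Unset Printing Implicit Defensive.
Local Open Scope fset_scope.

Definition is_group (G : Type) (mul : G -> G -> G) (one : G) (inv : G -> G) : Prop :=
  (forall x y z, mul x (mul y z) = mul (mul x y) z) /\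
  (forall x, mul one x = x) /\ (forall x, mul x one = x) /\
  (forall x, mul (inv x) x = one) /\ (forall x, mul x (inv x) = one).

(* (T_1,...,T_k) is a polytile: each T_i is a finite set containing 1, and
   there are non-empty Delta_i with G the disjoint union of the translates
   delta T_i (i, delta in Delta_i): every g lies in exactly one translate,
   indexed by a unique pair (i, delta). *)
Definition polytile (G : choiceType) (mul : G -> G -> G) (one : G)
    (k : nat) (T : 'I_k -> {fset G}) : Prop :=
  (forall i, one \in T i) /\
  exists Delta : 'I_k -> G -> Prop,
    (forall i, exists d, Delta i d) /\
    (forall g : G, exists! p : 'I_k * G,
        Delta p.1 p.2 /\ exists2 t, t \in T p.1 & g = mul p.2 t).

Definition fair_polytile (G : choiceType) (mul : G -> G -> G) (one : G)
    (k : nat) (T : 'I_k -> {fset G}) : Prop :=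
  polytile mul one T /\ (forall i j, #|` T i| = #|` T j|).

(* Put S = {1} ∪ F and n = |S|.  It suffices to partition G into pieces of
   size n such that x^-1 y lies in one fixed finite set K whenever x and y share
   a piece: the pieces, translated so as to contain 1, take finitely many shapes,
   and these shapes form a fair polytile; swapping points between two pieces
   (which only enlarges K) moves S into the piece of 1.
   If S generates a finite subgroup, its left cosets form such a partition.
   Otherwise the word-metric balls grow forever, so for every finite X there is
   an h for which X h is far from X.  Every point y is joined to X h by a
   geodesic forest (each y points to a neighbour one step closer to X h);
   cutting off, deepest first, n-element subtrees of height < n covers X by
   disjoint pieces of size n and diameter < 2n.  Since G is countable, König's
   lemma glues these local partitions into a global one. *)

From Stdlib Require Import Classical ClassicalEpsilon.
From Stdlib Require List.
From mathcomp Require Import all_boot.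
From mathcomp Require Import finmap.
From mathcomp Require Import zify.
Set Implicit Arguments. Unset Strict Implicit. Unset Printing Implicit Defensive.
Local Open Scope fset_scope.

Section DeepSubsets.
Variables (T : choiceType) (depth : T -> nat).

Lemma fset_argmax (W : {fset T}) x0 : x0 \in W ->
  exists2 y, y \in W & {in W, forall z, depth z <= depth y}.
Proof.
move=> x0W.
have exP : exists m, has (fun y => depth y == m) W by exists (depth x0); apply/hasP; exists x0.
have ubP m : has (fun y => depth y == m) W -> m <= \max_(z <- W) depth z.
  by case/hasP=> y yW /eqP <-; apply: leq_bigmax_seq.
case: (ex_maxnP exP ubP) => m /hasP[y yW /eqP dy] maxm.
by exists y => // z zW; rewrite dy; apply: maxm; apply/hasP; exists z.
Qed.

Definition deep_closed (W Q : {fset T}) :=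
  forall q y, q \in Q -> y \in W -> depth q < depth y -> y \in Q.

Lemma exists_deep_subset (W : {fset T}) k : k <= #|`W| ->
  exists Q : {fset T}, [/\ Q `<=` W, #|`Q| = k & deep_closed W Q].
Proof.
elim: k => [|k IH] lekW; first by exists fset0; rewrite fsub0set cardfs0.
have [Q [QW cardQ closedQ]] := IH (ltnW lekW).
have [x xWQ] : exists x, x \in W `\` Q.
  case: (fset_0Vmem (W `\` Q)) => [/eqP|[x]]; last by exists x.
  rewrite fsetD_eq0 => /fsubset_leq_card; rewrite cardQ; lia.
have [y /fsetDP[yW yQ] ymax] := fset_argmax xWQ.
exists (y |` Q); split.
- by rewrite fsubUset fsub1set yW QW.
- by rewrite cardfsU1 yQ cardQ.
- move=> q z /fset1UP[->|qQ] zW ltqz; apply/fset1UP; right; last exact: closedQ ltqz.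
  by apply: contraTT ltqz => zQ; rewrite -leqNgt ymax // inE zQ.
Qed.

End DeepSubsets.

Section Forest.
Variables (T : choiceType) (depth : T -> nat) (parent : T -> T).

Definition parent_closed (A : {fset T}) :=
  forall y, y \in A -> 0 < depth y -> parent y \in A /\ depth (parent y) = (depth y).-1.

Definition descendants (A : {fset T}) u :=
  [fset y in A | (depth u <= depth y) && (iter (depth y - depth u) parent y == u)].

Lemma iter_parent_closed A y k : parent_closed A -> y \in A -> k <= depth y ->
  iter k parent y \in A /\ depth (iter k parent y) = depth y - k.
Proof.
move=> closedA yA; elim: k => [|k IH] lek; first by rewrite subn0.
have [kA dk] := IH (ltnW lek).
have dk_gt0 : 0 < depth (iter k parent y) by rewrite dk subn_gt0.
have [pA dp] := closedA _ kA dk_gt0.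
by rewrite iterS dp dk subnS.
Qed.

Lemma card_descendants_iter A y m : parent_closed A -> y \in A -> m <= depth y ->
  m < #|` descendants A (iter m parent y)|.
Proof.
move=> closedA yA lemy.
have iterP j : j <= m -> iter j parent y \in A /\ depth (iter j parent y) = depth y - j.
  by move=> lejm; apply: iter_parent_closed (leq_trans lejm lemy).
set C := [fset iter j parent y | j in iota 0 m.+1].
have cardC : #|` C| = m.+1.
  rewrite card_in_imfset => [|i j].
    by rewrite -[LHS]/(size (undup (iota 0 m.+1))) undup_id ?iota_uniq // size_iota.
  rewrite !mem_iota !add0n !ltnS => lei lej /(congr1 depth).
  rewrite (iterP i lei).2 (iterP j lej).2; lia.
rewrite -cardC; apply: fsubset_leq_card; apply/fsubsetP => x /imfsetP[j].
rewrite mem_iota add0n ltnS => lejm ->.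
have [jA dj] := iterP j lejm; have [_ dm] := iterP m (leqnn m).
rewrite !inE jA dj dm /= -iterD; apply/andP; split; first lia.
by have -> : (depth y - j - (depth y - m) + j = m)%N by lia.
Qed.

Lemma parent_closedD A u Q : parent_closed A -> Q `<=` descendants A u ->
  deep_closed depth (descendants A u) Q -> parent_closed (A `\` Q).
Proof.
move=> closedA Qdesc closedQ y /fsetDP[yA yQ] dy_gt0.
have [pA dp] := closedA y yA dy_gt0.
split=> //; rewrite inE pA andbT; apply: contra yQ => pQ.
have := fsubsetP Qdesc _ pQ; rewrite !inE pA dp /= => /andP[ledu /eqP iter_u].
apply: (closedQ _ _ pQ); last by rewrite dp; lia.
rewrite !inE yA /=; apply/andP; split; first lia.
have -> : (depth y - depth u = ((depth y).-1 - depth u).+1)%N by lia.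
by rewrite iterSr iter_u.
Qed.

Variable n : nat.
Hypothesis n_gt0 : 0 < n.

Lemma descendants_shallow A u : parent_closed A -> u \in A ->
  (forall v, v \in A -> n <= #|` descendants A v| -> depth v <= depth u) ->
  forall x, x \in descendants A u -> depth x - depth u < n.
Proof.
move=> closedA uA umax x; rewrite !inE => /andP[xA /andP[ledux _]].
rewrite ltnNge; apply/negP => lenk.
have lek : (depth x - depth u).-1 <= depth x by lia.
have [vA dv] := iter_parent_closed closedA xA lek.
have := umax _ vA (leq_trans _ (card_descendants_iter closedA xA lek)).
rewrite dv; lia.
Qed.

Definition forest_pieces (A : {fset T}) (Ps : seq {fset T}) :=
  [/\ forall Q, Q \in Ps -> [/\ Q `<=` A, #|`Q| = n &
         exists u, forall x, x \in Q -> exists2 k, k < n & iter k parent x = u],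
      {in Ps &, forall Q1 Q2, (exists x, x \in Q1 /\ x \in Q2) -> Q1 = Q2} &
      forall y, y \in A -> n.-1 <= depth y -> exists2 Q, Q \in Ps & y \in Q].

Lemma forest_pieces_exist A : parent_closed A -> exists Ps, forest_pieces A Ps.
Proof.
have [N] := ubnP #|`A|; elim: N A => // N IH A.
rewrite ltnS => cardA closedA.
set U := [fset u in A | n <= #|` descendants A u|].
case: (fset_0Vmem U) => [U0|[u0 u0U]].
  exists [::]; split=> // y yA ledy; exfalso.
  have := card_descendants_iter closedA yA (leqnn _).
  have [rA dr] := iter_parent_closed closedA yA (leqnn (depth y)).
  have : iter (depth y) parent y \notin U by rewrite U0 inE.
  by rewrite !inE rA /= -ltnNge; lia.
(* Q: the n deepest descendants of a deepest node u having at least n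
   descendants; they all lie fewer than n generations below u. *)
have [u /[!inE] /andP[uA ndesc] umax] := fset_argmax depth u0U.
have [Q [Qdesc cardQ closedQ]] := exists_deep_subset depth ndesc.
have QA : Q `<=` A.
  by apply: fsubset_trans Qdesc _; apply/fsubsetP => x /[!inE] /andP[].
have closedAQ : parent_closed (A `\` Q) := parent_closedD closedA Qdesc closedQ.
have cardAQ : #|` A `\` Q| < N.
  by move: (fsubset_leq_card QA); rewrite cardfsDS // cardQ; lia.
have [Ps [PsA Psdisj Pscover]] := IH _ cardAQ closedAQ.
have shallow : forall x, x \in descendants A u -> depth x - depth u < n.
  by apply: descendants_shallow closedA uA _ => v vA nv; apply: umax; rewrite !inE vA.
exists (Q :: Ps); split.
- move=> Q' /predU1P[->|Q'Ps].
    split=> //; exists u => x /(fsubsetP Qdesc) xdesc.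
    exists (depth x - depth u)%N; first exact: shallow.
    by move: xdesc; rewrite !inE => /and3P[_ _ /eqP].
  by have [Q'A -> cen] := PsA _ Q'Ps; split=> //; apply: fsubset_trans Q'A (fsubsetDl _ _).
- have QPs_disj Q' x : Q' \in Ps -> x \in Q -> x \notin Q'.
    move=> Q'Ps xQ; have [Q'A _ _] := PsA _ Q'Ps.
    by apply: contraL xQ => /(fsubsetP Q'A) /fsetDP[].
  move=> Q1 Q2 /predU1P[->|Q1Ps] /predU1P[->|Q2Ps] [x [x1 x2]] //.
  + by rewrite (negPf (QPs_disj _ _ Q2Ps x1)) in x2.
  + by rewrite (negPf (QPs_disj _ _ Q1Ps x2)) in x1.
  + exact: Psdisj Q1Ps Q2Ps (ex_intro _ x (conj x1 x2)).
- move=> y yA ledy; case yQ: (y \in Q); first by exists Q; rewrite ?mem_head.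
  have [Q' Q'Ps yQ'] : exists2 Q', Q' \in Ps & y \in Q' by apply: Pscover; rewrite ?inE ?yQ.
  by exists Q'; rewrite // inE Q'Ps orbT.
Qed.

End Forest.

Lemma mem_In (T : eqType) (x : T) (s : seq T) : x \in s -> List.In x s.
Proof. by elim: s => //= a s IH /predU1P[->|/IH]; [left|right]. Qed.

Section Konig.
Variables (X : Type) (agree : nat -> X -> X -> Prop) (V : nat -> X -> Prop).
Hypothesis agree_sym : forall r c c', agree r c c' -> agree r c' c.
Hypothesis agree_trans : forall r c1 c2 c3, agree r c1 c2 -> agree r c2 c3 -> agree r c1 c3.
Hypothesis V_pred : forall r c, V r.+1 c -> V r c.
Hypothesis V_finite : forall r, exists L : list X,
  forall c, V r c -> exists2 c', List.In c' L & agree r c c'.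

Lemma V_le r s c : r <= s -> V s c -> V r c.
Proof. by move=> /subnK <-; elim: (s - r) => //= k IH /V_pred. Qed.

Definition extends_to r (P : X -> Prop) c s := exists c', [/\ V s c', P c' & agree r c c'].

Lemma extends_to_le r P c s s' : s' <= s -> extends_to r P c s -> extends_to r P c s'.
Proof. by move=> les [c' [Vc' Pc' ac']]; exists c'; split=> //; apply: V_le Vc'. Qed.

(* If the extensions of each of the finitely many classes at level r died out
   at some height, they would all die out above the largest of these heights. *)
Lemma konig_extend r (P : X -> Prop) :
  (forall s, r <= s -> exists c, V s c /\ P c) ->
  exists c, [/\ V r c, P c & forall s, r <= s -> extends_to r P c s].
Proof.
move=> hP; have [L hL] := V_finite r.
have [l [_ hl]] : exists l, List.In l L /\ forall s, r <= s -> extends_to r P l s.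
  apply: NNPP => noext.
  have dies L' : (forall l, List.In l L' -> List.In l L) ->
      exists2 S, r <= S & forall l, List.In l L' -> ~ extends_to r P l S.
    elim: L' => [|a L' IH] subL; first by exists r.
    have [S leS diesS] := IH (fun l h => subL l (or_intror h)).
    have [Sa [leSa diesSa]] : exists s, r <= s /\ ~ extends_to r P a s.
      apply: NNPP => h; apply: noext; exists a; split; first exact: subL a (or_introl erefl).
      by move=> s les; apply: NNPP => h'; apply: h; exists s.
    exists (maxn S Sa); first exact: leq_trans leS (leq_maxl _ _).
    move=> l [<-|lL'] ext; first by apply: diesSa; apply: extends_to_le ext; apply: leq_maxr.
    by apply: (diesS l lL'); apply: extends_to_le ext; apply: leq_maxl.
  have [S leS diesS] := dies L (fun l h => h).
  have [c [Vc Pc]] := hP S leS.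
  have [l lL acl] := hL c (V_le leS Vc).
  by apply: (diesS l lL); exists c; split=> //; apply: agree_sym.
have [c [Vc Pc alc]] := hl r (leqnn r).
exists c; split=> // s les; have [c' [Vc' Pc' alc']] := hl s les.
by exists c'; split=> //; apply: agree_trans (agree_sym alc) alc'.
Qed.

Definition extendable r c := V r c /\ forall s, r <= s -> exists c', V s c' /\ agree r c c'.

Lemma extendable_step r c : extendable r c -> exists c', extendable r.+1 c' /\ agree r c c'.
Proof.
case=> Vc ext.
have [c' [Vc' acc' ext']] := @konig_extend r.+1 (agree r c) (fun s les => ext s (ltnW les)).
exists c'; split=> //; split=> // s les.
by have [c'' [? _ ?]] := ext' s les; exists c''.
Qed.

Lemma konig : (forall r, exists c, V r c) ->
  exists cs : nat -> X, forall r, V r (cs r) /\ agree r (cs r) (cs r.+1).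
Proof.
move=> Vne.
have [c0 [Vc0 _ ext0]] := @konig_extend 0 (fun _ => True)
  (fun s _ => let: ex_intro c Vc := Vne s in ex_intro _ c (conj Vc I)).
have start : {c | extendable 0 c}.
  apply: constructive_indefinite_description; exists c0; split=> // s les.
  by have [c [? _ ?]] := ext0 s les; exists c.
have step r (c : {c | extendable r c}) : {c' | extendable r.+1 c' /\ agree r (sval c) c'}.
  by apply: constructive_indefinite_description; apply: extendable_step (svalP c).
pose fix cs r : {c | extendable r c} :=
  if r is r'.+1 then let: exist c' (conj e _) := step r' (cs r') in exist _ c' e else start.
exists (fun r => sval (cs r)) => r; split; first by case: (cs r) => c [].
by rewrite /=; case: (step r (cs r)) => c' [].
Qed.
End Konig.

Lemma finite_restrictions (T : eqType) (Y : Type) (y0 : Y) (l : seq T)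
    (cand : T -> list Y) :
  exists L : list (T -> Y), forall c : T -> Y,
    (forall g, g \in l -> List.In (c g) (cand g)) ->
    exists2 c', List.In c' L & forall g, g \in l -> c' g = c g.
Proof.
elim: l => [|a l [L' hL']].
  by exists [:: fun _ => y0] => c _; exists (fun _ => y0); first left.
exists (List.flat_map (fun v => List.map (fun f x => if x == a then v else f x) L') (cand a)).
move=> c hc; have [c' c'L' ec'] := hL' c (fun g gl => hc g (mem_behead (s := a :: l) gl)).
exists (fun x => if x == a then c a else c' x).
  apply/List.in_flat_map; exists (c a); split; first by apply: hc; rewrite mem_head.
  by apply/List.in_map_iff; exists c'.
by move=> g /predU1P[->|gl]; rewrite ?eqxx //; case: eqP => [->|_]; last exact: ec'.
Qed.

Section Group.
Variables (G : choiceType) (mul : G -> G -> G) (one : G) (inv : G -> G).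
Hypothesis groupG : is_group mul one inv.

Lemma mulgA x y z : mul x (mul y z) = mul (mul x y) z.
Proof. by case: groupG. Qed.
Lemma mul1g x : mul one x = x.
Proof. by case: groupG => _ []. Qed.
Lemma mulg1 x : mul x one = x.
Proof. by case: groupG => _ [] _ []. Qed.
Lemma mulVg x : mul (inv x) x = one.
Proof. by case: groupG => _ [] _ [] _ []. Qed.
Lemma mulgV x : mul x (inv x) = one.
Proof. by case: groupG => _ [] _ [] _ []. Qed.
Lemma mulKg x y : mul (inv x) (mul x y) = y.
Proof. by rewrite mulgA mulVg mul1g. Qed.
Lemma mulKVg x y : mul x (mul (inv x) y) = y.
Proof. by rewrite mulgA mulgV mul1g. Qed.
Lemma mulgK x y : mul (mul y x) (inv x) = y.
Proof. by rewrite -mulgA mulgV mulg1. Qed.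
Lemma mulg_inj x : injective (mul x).
Proof. by move=> y z e; rewrite -(mulKg x y) e mulKg. Qed.
Lemma invgK x : inv (inv x) = x.
Proof. by rewrite -(mulg1 (inv (inv x))) -(mulVg x) mulgA mulVg mul1g. Qed.
Lemma invg1 : inv one = one.
Proof. by rewrite -(mul1g (inv one)) mulgV. Qed.
Lemma invMg x y : inv (mul x y) = mul (inv y) (inv x).
Proof. by apply: (@mulg_inj (mul x y)); rewrite mulgV -mulgA (mulgA y) mulgV mul1g mulgV. Qed.

Definition bounded_partition n (K : {fset G}) (P : G -> {fset G}) :=
  [/\ forall g, g \in P g, forall g, #|` P g| = n,
      forall g g' x, x \in P g -> x \in P g' -> P g = P g' &
      forall g, {in P g &, forall x y, mul (inv x) y \in K}].

Section Partition.
Variables (n : nat) (K : {fset G}) (P : G -> {fset G}).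
Hypothesis partP : bounded_partition n K P.

Let P_self g : g \in P g. Proof. by case: partP. Qed.
Let P_card g : #|` P g| = n. Proof. by case: partP. Qed.
Let P_eq g g' x : x \in P g -> x \in P g' -> P g = P g'.
Proof. by case: partP => _ _ eqP _; apply: eqP. Qed.
Let P_bounded g : {in P g &, forall x y, mul (inv x) y \in K}. Proof. by case: partP. Qed.

Definition center (Q : {fset G}) : G := if one \in Q then one else head one Q.

Lemma center_mem Q x : x \in Q -> center Q \in Q.
Proof.
rewrite /center; case: ifP => // _.
suff head_mem (s : seq G) : x \in s -> head one s \in s by apply: head_mem.
by case: s => // a s _; rewrite mem_head.
Qed.

Definition shape g := [fset mul (inv (center (P g))) x | x in P g].

Lemma P_center g : P (center (P g)) = P g.
Proof. exact: P_eq (P_self _) (center_mem (P_self g)). Qed.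

Lemma shape_center g : shape (center (P g)) = shape g.
Proof. by rewrite /shape P_center. Qed.

Lemma shape1 g : one \in shape g.
Proof.
by apply/imfsetP; exists (center (P g)); [apply: center_mem (P_self g) | rewrite mulVg].
Qed.

Lemma shape_sub g : shape g `<=` K.
Proof. by apply/fsubsetP => _ /imfsetP[x xP ->]; apply: P_bounded (center_mem xP) xP. Qed.

Lemma card_shape g : #|` shape g| = n.
Proof. by rewrite card_imfset ?P_card //; apply: mulg_inj. Qed.

Lemma shape_at1 : shape one = P one.
Proof.
have c1 : center (P one) = one by rewrite /center P_self.
apply/fsetP => x; rewrite /shape c1 invg1.
by apply/imfsetP/idP => [[y yP ->]|xP]; [rewrite mul1g | exists x; rewrite ?mul1g].
Qed.

(* Only finitely many shapes occur, since they are subsets of K. *)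
Lemma shape_enum : exists rest : seq {fset G},
  [/\ uniq (shape one :: rest), {in rest, forall S, exists g, shape g = S} &
      forall g, shape g \in shape one :: rest].
Proof.
pose is_shape S : bool :=
  if excluded_middle_informative (exists g, shape g = S) then true else false.
have is_shapeP S : is_shape S <-> exists g, shape g = S.
  by rewrite /is_shape; case: excluded_middle_informative.
exists [seq S <- fpowerset K | is_shape S & S != shape one]; split.
- by rewrite /= filter_uniq ?fset_uniq // mem_filter eqxx andbF.
- by move=> S; rewrite mem_filter => /andP[/andP[iS _] _]; apply: (is_shapeP S).1.
- move=> g; rewrite inE mem_filter; case: eqP => //= _.
  by rewrite fpowersetE shape_sub !andbT; apply/is_shapeP; exists g.
Qed.

Section Swap.
Variables a x y : G.
Hypotheses (xPa : x \in P a) (yPa : y \notin P a) (x_neq_a : x != a).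

Local Notation A := (P a).
Local Notation B := (P y).
Local Notation A' := (y |` (A `\ x)).
Local Notation B' := (x |` (B `\ y)).

Definition swapped g := if g \in A' then A' else if g \in B' then B' else P g.

Let xB : x \notin B.
Proof. by apply: contra yPa => xB; rewrite (P_eq xPa xB) P_self. Qed.

Let y_neq_x : y != x.
Proof. by apply: contraNneq yPa => ->. Qed.

Let A'_sub : A' `<=` A `|` B.
Proof. by apply/fsubsetP => z /fset1UP[->|/fsetD1P[_ zA]]; rewrite inE ?P_self ?orbT ?zA. Qed.

Let B'_sub : B' `<=` A `|` B.
Proof. by apply/fsubsetP => z /fset1UP[->|/fsetD1P[_ zB]]; rewrite inE ?xPa ?zB ?orbT. Qed.

Let A'B'_disjoint z : z \in A' -> z \notin B'.
Proof.
case/fset1UP=> [->|/fsetD1P[zx zA]]; rewrite !inE negb_or ?eqxx ?andbF ?y_neq_x //=.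
by rewrite zx /=; apply: contraNN yPa => /andP[_ zB]; rewrite (P_eq zA zB) P_self.
Qed.

Let other_piece g z : g \notin A' -> g \notin B' -> z \in P g -> z \notin A `|` B.
Proof.
move=> gA' gB' zPg; apply/negP => /fsetUP[zA|zB].
  have gA : g \in A by rewrite -(P_eq zPg zA) P_self.
  by move: gA' gB'; rewrite !inE gA andbT; case: (g =P x) => [->|]; rewrite ?eqxx ?orbT.
have gB : g \in B by rewrite -(P_eq zPg zB) P_self.
by move: gA' gB'; rewrite !inE gB andbT; case: (g =P y) => [->|]; rewrite ?eqxx ?orbT.
Qed.

Let card_A' : #|` A'| = n.
Proof. by rewrite cardfsU1 !inE (negbTE yPa) andbF /= -(P_card a) (cardfsD1 x A) xPa. Qed.

Let card_B' : #|` B'| = n.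
Proof. by rewrite cardfsU1 !inE (negbTE xB) andbF /= -(P_card y) (cardfsD1 y B) P_self. Qed.

Lemma swapped_partition :
  bounded_partition n (K `|` [fset mul (inv u) v | u in A `|` B, v in A `|` B]) swapped.
Proof.
split.
- by move=> g; rewrite /swapped; do 2!case: ifP => //.
- move=> g; rewrite /swapped; case: ifP => _; first exact: card_A'.
  by case: ifP => _; [exact: card_B' | exact: P_card].
- move=> g g' z; rewrite /swapped.
  case: ifP => gA'; [|case: ifP => gB']; (case: ifP => g'A'; [|case: ifP => g'B']) => // z1 z2.
  all: try by rewrite (negPf (A'B'_disjoint z1)) in z2.
  all: try by rewrite (negPf (A'B'_disjoint z2)) in z1.
  all: try by move: (other_piece (negbT g'A') (negbT g'B') z2);
    rewrite ?(fsubsetP A'_sub _ z1) ?(fsubsetP B'_sub _ z1).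
  all: try by move: (other_piece (negbT gA') (negbT gB') z1);
    rewrite ?(fsubsetP A'_sub _ z2) ?(fsubsetP B'_sub _ z2).
  exact: P_eq z1 z2.
- have AB_bounded u v : u \in A `|` B -> v \in A `|` B ->
      mul (inv u) v \in K `|` [fset mul (inv u) v | u in A `|` B, v in A `|` B].
    by move=> uAB vAB; rewrite inE; apply/orP; right; apply/imfset2P; exists u => //; exists v.
  move=> g u v; rewrite /swapped; case: ifP => _; [|case: ifP => _] => uP vP.
  + by apply: AB_bounded; apply: (fsubsetP A'_sub).
  + by apply: AB_bounded; apply: (fsubsetP B'_sub).
  + by rewrite inE (P_bounded uP vP).
Qed.

Lemma swapped_a : swapped a = y |` (P a `\ x).
Proof. by rewrite /swapped ifT // !inE P_self andbT (eq_sym a x) x_neq_a orbT. Qed.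
End Swap.

End Partition.

Lemma fair_polytile_of_partition n K P : bounded_partition n K P ->
  exists (k : nat) (T : 'I_k.+1 -> {fset G}), fair_polytile mul one T /\ T ord0 = P one.
Proof.
move=> partP; have [P_self _ P_eq _] := partP.
have [rest [uniqL shapeL memL]] := shape_enum partP.
set L := shape P one :: rest.
have LP S : S \in L -> exists g, shape P g = S.
  by case/predU1P=> [->|/shapeL//]; exists one.
pose T (i : 'I_(size rest).+1) := nth (shape P one) L i.
have TL i : T i \in L by apply: mem_nth.
exists (size rest), T; split; last exact: shape_at1 partP.
split=> [|i j]; last first.
  by have [g <-] := LP _ (TL i); have [g' <-] := LP _ (TL j); rewrite !(card_shape partP).
split=> [i|]; first by have [g <-] := LP _ (TL i); exact: shape1 partP g.
(* The tile T_i is translated to every piece of shape T_i, by the center of that piece. *)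
exists (fun i d => center (P d) = d /\ shape P d = T i); split.
  move=> i; have [g eg] := LP _ (TL i).
  by exists (center (P g)); rewrite (P_center partP) (shape_center partP).
move=> g; set d := center (P g).
have ltiL : index (shape P d) L < (size rest).+1 by rewrite index_mem.
exists (Ordinal ltiL, d); split.
  split; first by rewrite /= /d (P_center partP) /T nth_index.
  exists (mul (inv d) g); last by rewrite mulKVg.
  by rewrite /T /= nth_index // /d (shape_center partP); apply/imfsetP; exists g.
move=> [i d'] /= [[cd' sd'] [t tT gd't]].
have gP : g \in P d'.
  by move: tT; rewrite gd't -sd' => /imfsetP[x xP ->]; rewrite cd' mulKVg.
have dd' : d = d' by rewrite /d (P_eq _ _ _ (P_self g) gP) cd'.
congr (_, _) => //; apply/eqP; rewrite -val_eqE; apply/eqP.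
by change (index (shape P d) L = i); rewrite dd' sd' /T index_uniq.
Qed.

(* Move S into the piece of one by swaps, one point at a time. *)
Lemma partition_with_piece n K P (S : {fset G}) : bounded_partition n K P ->
  one \in S -> #|` S| <= n -> exists K' P', bounded_partition n K' P' /\ S `<=` P' one.
Proof.
move=> partP S1 cardS; have [m] := ubnP #|` S `\` P one|.
elim: m K P partP => // m IH K P partP; rewrite ltnS => missing.
case: (fset_0Vmem (S `\` P one)) => [/eqP|[s /fsetDP[sS sP]]].
  by rewrite fsetD_eq0 => SP; exists K, P.
have [P_self P_card _ _] := partP.
have [x /fsetDP[xP xS]] : exists x, x \in P one `\` S.
  case: (fset_0Vmem (P one `\` S)) => [/eqP|[x]]; last by exists x.
  rewrite fsetD_eq0 => PS; have : P one `<=` S `\ s by rewrite fsubsetD1 PS sP.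
  by move/fsubset_leq_card; rewrite P_card; move: (cardfsD1 s S); rewrite sS; lia.
have x_neq_one : x != one by apply: contraNneq xS => ->.
apply: (IH _ _ (swapped_partition partP xP sP)); apply: leq_trans missing.
have : S `\` swapped P one x s one `<=` (S `\` P one) `\ s.
  apply/fsubsetP => z; rewrite (swapped_a partP s x_neq_one) !inE negb_or negb_and negbK.
  case/andP=> /andP[-> /orP[/eqP zx|->]] zS //; by rewrite -zx zS in xS.
move/fsubset_leq_card/leq_ltn_trans; apply.
by rewrite [X in _ < X](cardfsD1 s) inE sS sP.
Qed.

Lemma coset_partition (H : {fset G}) : one \in H ->
  {in H &, forall x y, mul x y \in H} -> {in H, forall x, inv x \in H} ->
  bounded_partition #|` H| H (fun g => [fset mul g x | x in H]).
Proof.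
move=> H1 HM HV.
have coset_sub g g' z : z \in [fset mul g x | x in H] -> z \in [fset mul g' x | x in H] ->
    [fset mul g x | x in H] `<=` [fset mul g' x | x in H].
  move=> /imfsetP[x xH ->] /imfsetP[x' x'H e]; apply/fsubsetP => _ /imfsetP[y yH ->].
  apply/imfsetP; exists (mul (mul x' (inv x)) y); first by rewrite !HM ?HV.
  have -> : g = mul g' (mul x' (inv x)) by rewrite mulgA -e mulgK.
  by rewrite -mulgA.
split.
- by move=> g; apply/imfsetP; exists one; rewrite ?mulg1.
- by move=> g; rewrite card_imfset //; apply: mulg_inj.
- move=> g g' z z1 z2; apply/eqP.
  by rewrite eqEfsubset (coset_sub _ _ _ z1 z2) (coset_sub _ _ _ z2 z1).
- move=> g _ _ /imfsetP[x xH ->] /imfsetP[y yH ->].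
  by rewrite invMg -mulgA mulKg HM ?HV.
Qed.

Definition local_partition n (K X : {fset G}) (Ps : seq {fset G}) :=
  [/\ forall Q, Q \in Ps -> #|` Q| = n /\ {in Q &, forall x y, mul (inv x) y \in K},
      {in Ps &, forall Q1 Q2, (exists x, x \in Q1 /\ x \in Q2) -> Q1 = Q2} &
      forall x, x \in X -> exists2 Q, Q \in Ps & x \in Q].

Section Ball.
Variable S : {fset G}.
Hypothesis S_inv : forall s, s \in S -> inv s \in S.

Fixpoint ball (D : nat) : {fset G} :=
  if D is D'.+1 then ball D' `|` [fset mul s x | s in S, x in ball D'] else [fset one].

Lemma ballSP D x :
  reflect (x \in ball D \/ exists2 s, s \in S & exists2 y, y \in ball D & x = mul s y)
          (x \in ball D.+1).
Proof. by rewrite /= in_fsetU; apply: (iffP orP) => -[|/imfset2P]; by [left | right]. Qed.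

Lemma ball_one D : one \in ball D.
Proof. by elim: D => [|D IH]; [rewrite inE | apply/ballSP; left]. Qed.

Lemma ball_mono a b : a <= b -> ball a `<=` ball b.
Proof.
move=> /subnK <-; elim: (b - a) => [|k IH] //=.
by apply: fsubset_trans IH (fsubsetUl _ _).
Qed.

Lemma ball1 s : s \in S -> s \in ball 1.
Proof. by move=> sS; apply/ballSP; right; exists s => //; exists one; rewrite ?inE ?mulg1. Qed.

Lemma ball_mul a b x y : x \in ball a -> y \in ball b -> mul x y \in ball (a + b).
Proof.
elim: a x => [|a IH] x /=; first by rewrite inE => /eqP -> yb; rewrite mul1g.
move=> /ballSP[xa yb|[s sS [x' x'a ->]] yb].
  by apply: (fsubsetP (ball_mono (leqnSn _))); apply: IH.
by rewrite -mulgA; apply/ballSP; right; exists s => //; exists (mul x' y) => //; apply: IH.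
Qed.

Lemma ball_inv D x : x \in ball D -> inv x \in ball D.
Proof.
elim: D x => [|D IH] x; first by rewrite inE => /eqP ->; rewrite invg1 inE.
case/ballSP=> [xD|[s sS [y yD ->]]].
  by apply: (fsubsetP (ball_mono (leqnSn _))); apply: IH.
by rewrite invMg -addn1; apply: ball_mul; [apply: IH | apply: ball1; apply: S_inv].
Qed.

Lemma ball_stable D : ball D.+1 `<=` ball D -> forall j, ball j `<=` ball D.
Proof.
move=> stable; elim=> [|j IH]; first exact: ball_mono.
apply/fsubsetP => x /ballSP[/(fsubsetP IH)//|[s sS [y yj ->]]].
apply: (fsubsetP stable); apply/ballSP; right.
by exists s => //; exists y => //; apply: (fsubsetP IH).
Qed.

Lemma ball_stable_mul D : ball D.+1 `<=` ball D ->
  {in ball D &, forall x y, mul x y \in ball D}.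
Proof.
move=> stable x y xD yD.
by apply: (fsubsetP (ball_stable stable (D + D))); apply: ball_mul.
Qed.

Lemma ball_unbounded : (forall D, ~ ball D.+1 `<=` ball D) ->
  forall F : {fset G}, exists2 h, h \in ball #|` F| & h \notin F.
Proof.
move=> unstable F.
have grow D : D < #|` ball D|.
  elim: D => [|D IH]; first by rewrite cardfs1.
  apply: leq_ltn_trans IH (fproper_ltn_card _); rewrite fproperE ball_mono //=.
  by apply/negP; apply: unstable.
case: (fset_0Vmem (ball #|` F| `\` F)) => [/eqP|[h /fsetDP[hball hF]]]; last by exists h.
by rewrite fsetD_eq0 => /fsubset_leq_card; rewrite leqNgt grow.
Qed.

Section LocalPartition.
Variable n : nat.
Hypothesis n_gt0 : 0 < n.
Variables (X : {fset G}) (h : G) (D0 : nat).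
Hypothesis h_ball : h \in ball D0.
Hypothesis h_far : forall x x', x \in X -> x' \in X -> mul (inv x) (mul x' h) \notin ball n.

Local Notation Z := [fset mul x h | x in X].

(* depth y is the word distance from y to Z; parent y is a neighbour of y one
   step closer to Z (ties broken by the order of S). *)
Definition reaches y D := has (fun z => mul (inv y) z \in ball D) Z.
Definition reachable y := exists D, reaches y D.

Definition depth y : nat :=
  if excluded_middle_informative (reachable y) is left e then ex_minn e else 0.

Lemma depthP y : reachable y -> reaches y (depth y) /\ forall D, reaches y D -> depth y <= D.
Proof. by rewrite /depth; case: excluded_middle_informative => // e _; case: ex_minnP. Qed.

Lemma reachesP y D : reflect (exists2 z, z \in Z & mul (inv y) z \in ball D) (reaches y D).
Proof. exact: hasP. Qed.

Lemma reachable_mul y s : reachable y -> s \in ball 1 ->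
  reachable (mul y s) /\ depth y <= (depth (mul y s)).+1.
Proof.
move=> y_reach s1; have [D /reachesP[z zZ yz]] := y_reach.
have ys_reach : reachable (mul y s).
  exists (1 + D)%N; apply/reachesP; exists z => //.
  by rewrite invMg -mulgA; apply: ball_mul => //; apply: ball_inv.
split=> //; have [/reachesP[z' z'Z ysz'] _] := depthP ys_reach.
rewrite -add1n; apply: (depthP y_reach).2; apply/reachesP; exists z' => //.
have -> : mul (inv y) z' = mul s (mul (inv (mul y s)) z') by rewrite invMg !mulgA mulgV mul1g.
exact: ball_mul.
Qed.

Lemma depth_decrease y : reachable y -> 0 < depth y ->
  exists2 s, s \in S & depth (mul y s) < depth y.
Proof.
move=> y_reach; have [/reachesP[z zZ yz] depth_min] := depthP y_reach.
case Ey: (depth y) yz => [//|D] /ballSP[yzD|[s sS [w wD yzsw]]] _.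
  by have := depth_min D (introT (reachesP _ _) (ex_intro2 _ _ z zZ yzD)); rewrite Ey ltnn.
exists s => //; apply: leq_ltn_trans (ltnSn D).
have [ys_reach _] := reachable_mul y_reach (ball1 sS).
apply: (depthP ys_reach).2; apply/reachesP; exists z => //.
by rewrite invMg -mulgA yzsw mulKg.
Qed.

Definition parent y := mul y (nth one S (find (fun s => depth (mul y s) < depth y) S)).

Lemma parent_ball y : exists2 s, s \in ball 1 & parent y = mul y s.
Proof.
rewrite /parent; set i := find _ _; exists (nth one S i) => //.
case: (ltnP i (size S)) => [ltiS|leSi]; first by apply: ball1; apply: mem_nth.
by rewrite nth_default // ball_one.
Qed.

Lemma parent_depth y : reachable y -> 0 < depth y ->
  reachable (parent y) /\ depth (parent y) = (depth y).-1.
Proof.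
move=> y_reach dy_gt0.
have has_step : has (fun s => depth (mul y s) < depth y) S.
  by have [s sS lt] := depth_decrease y_reach dy_gt0; apply/hasP; exists s.
have := nth_find one has_step; rewrite -/(parent y) => lt.
have [s s1 ys] := parent_ball y; rewrite ys in lt *.
have [ys_reach le] := reachable_mul y_reach s1.
by split=> //; lia.
Qed.

Definition tree := [fset iter k parent x | x in X, k in iota 0 (depth x).+1].

Lemma reachable_X x : x \in X -> reachable x.
Proof.
move=> xX; exists D0; apply/reachesP; exists (mul x h); rewrite ?mulKg //.
by apply/imfsetP; exists x.
Qed.

Lemma depth_X x : x \in X -> n <= depth x.
Proof.
move=> xX; rewrite leqNgt; apply/negP => lt_x_n.
have [/reachesP[_ /imfsetP[x' x'X ->] xx'h] _] := depthP (reachable_X xX).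
by move: (h_far xX x'X); rewrite (fsubsetP (ball_mono (ltnW lt_x_n)) _ xx'h).
Qed.

Lemma iter_parent_depth x k : reachable x -> k <= depth x ->
  reachable (iter k parent x) /\ depth (iter k parent x) = depth x - k.
Proof.
move=> x_reach; elim: k => [|k IH] lek; first by rewrite subn0.
have [k_reach dk] := IH (ltnW lek).
have dk_gt0 : 0 < depth (iter k parent x) by rewrite dk subn_gt0.
have [p_reach dp] := parent_depth k_reach dk_gt0.
by rewrite iterS dp dk subnS.
Qed.

Lemma parent_closed_tree : parent_closed depth parent tree.
Proof.
move=> _ /imfset2P[x xX [k /[!mem_iota] /[!add0n] /[!ltnS] lek ->]] dk_gt0.
have [k_reach dk] := iter_parent_depth (reachable_X xX) lek.
split; last exact: (parent_depth k_reach dk_gt0).2.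
apply/imfset2P; exists x => //; exists k.+1; rewrite ?iterS // mem_iota add0n ltnS.
by move: dk_gt0; rewrite dk; lia.
Qed.

Lemma iter_parent_ball x k : exists2 w, w \in ball k & iter k parent x = mul x w.
Proof.
elim: k => [|k [w wk ek]]; first by exists one; rewrite ?mulg1 ?ball_one.
have [s s1 es] := parent_ball (iter k parent x).
by exists (mul w s); rewrite ?iterS ?es ?ek ?mulgA // -addn1 ball_mul.
Qed.

Lemma local_partition_far : exists Ps, local_partition n (ball (n + n)) X Ps.
Proof.
have [Ps [PsA Psdisj Pscover]] := forest_pieces_exist n_gt0 parent_closed_tree.
exists Ps; split=> //.
- move=> Q QPs; have [_ cardQ [u uQ]] := PsA Q QPs; split=> // x y xQ yQ.
  have [kx ltkx ex] := uQ x xQ; have [ky ltky ey] := uQ y yQ.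
  have [wx wxk ex'] := iter_parent_ball x kx; have [wy wyk ey'] := iter_parent_ball y ky.
  have -> : mul (inv x) y = mul wx (inv wy).
    by rewrite -[y](mulgK wy) -ey' ey -ex ex' -mulgA mulKg.
  apply: (fsubsetP (ball_mono (leq_add (ltnW ltkx) (ltnW ltky)))).
  by apply: ball_mul => //; apply: ball_inv.
- move=> x xX; apply: Pscover; first by apply/imfset2P; exists x => //; exists 0.
  exact: leq_trans (leq_pred n) (depth_X xX).
Qed.

End LocalPartition.

Lemma local_partition_unbounded n : 0 < n -> (forall D, ~ ball D.+1 `<=` ball D) ->
  forall X, exists Ps, local_partition n (ball (n + n)) X Ps.
Proof.
move=> n_gt0 unstable X.
pose F := [fset mul a b | a in [fset mul (inv x') x | x in X, x' in X], b in ball n].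
have [h h_ball hF] := ball_unbounded unstable F.
apply: (local_partition_far n_gt0 h_ball) => x x' xX x'X; apply: contra hF => far.
apply/imfset2P; exists (mul (inv x') x); first by apply/imfset2P; exists x => //; exists x'.
by exists (mul (inv x) (mul x' h)) => //; rewrite -mulgA mulKVg mulKg.
Qed.

End Ball.

End Group.

Section Compactness.
Variables (G : countType) (mul : G -> G -> G) (one : G) (inv : G -> G).
Hypothesis groupG : is_group mul one inv.
Variables (n : nat) (K : {fset G}).
Hypothesis local : forall X : {fset G}, exists Ps, local_partition mul inv n K X Ps.

Definition initial_segment r : {fset G} := [fset x | x in pmap (@pickle_inv G) (iota 0 r)].

Lemma initial_segment_pickle g : g \in initial_segment (choice.pickle g).+1.
Proof.
apply/imfsetP; exists g => //; rewrite mem_pmap; apply/mapP; exists (choice.pickle g).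
  by rewrite mem_iota add0n ltnS leqnn.
by rewrite pickleK_inv.
Qed.

Lemma initial_segment_mono r s : r <= s -> initial_segment r `<=` initial_segment s.
Proof.
move=> lers; apply/fsubsetP => y /imfsetP[x]; rewrite mem_pmap => /mapP[i].
rewrite mem_iota add0n => ltir ix ->; apply/imfsetP; exists x => //.
by rewrite mem_pmap; apply/mapP; exists i; rewrite // mem_iota add0n (leq_trans ltir lers).
Qed.

Definition partial_partition r (c : G -> {fset G}) := forall g, g \in initial_segment r ->
  [/\ g \in c g, #|` c g| = n, {in c g &, forall x y, mul (inv x) y \in K} &
      forall g' z, g' \in initial_segment r -> z \in c g -> z \in c g' -> c g = c g'].

Definition agree_on r (c c' : G -> {fset G}) := forall g, g \in initial_segment r -> c g = c' g.

Lemma partial_partition_exists r : exists c, partial_partition r c.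
Proof.
have [Ps [PsP Psdisj Pscover]] := local (initial_segment r).
pose c g := head [fset g] [seq Q : {fset G} <- Ps | g \in Q].
have cP g : g \in initial_segment r -> c g \in Ps /\ g \in c g.
  move=> gr; have [Q QPs gQ] := Pscover g gr.
  have : c g \in [seq Q : {fset G} <- Ps | g \in Q].
    have : Q \in [seq Q : {fset G} <- Ps | g \in Q] by rewrite mem_filter gQ QPs.
    by rewrite /c; case: [seq Q : {fset G} <- Ps | g \in Q] => //= Q' l _; rewrite mem_head.
  by rewrite mem_filter => /andP[-> ->].
exists c => g gr; have [cPs gc] := cP g gr; have [cardc boundc] := PsP _ cPs.
split=> // g' z g'r z1 z2; have [c'Ps _] := cP g' g'r.
by apply: Psdisj => //; exists z.
Qed.

Lemma partial_partition_finite r : exists L : list (G -> {fset G}),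
  forall c, partial_partition r c -> exists2 c', List.In c' L & agree_on r c c'.
Proof.
have [L Lrestr] := finite_restrictions fset0 (enum_fset (initial_segment r))
  (fun g => enum_fset (fpowerset [fset mul g k | k in K])).
exists L => c cr.
have cand g : g \in enum_fset (initial_segment r) ->
    List.In (c g) (enum_fset (fpowerset [fset mul g k | k in K])).
  move=> gr; apply: mem_In; rewrite fpowersetE; have [gc _ boundc _] := cr g gr.
  apply/fsubsetP => y yc; apply/imfsetP; exists (mul (inv g) y); last by rewrite (mulKVg groupG).
  exact: boundc.
by have [c' c'L c'c] := Lrestr c cand; exists c' => // g gr; rewrite c'c.
Qed.

Lemma partition_of_local_partitions : exists P, bounded_partition mul inv n K P.
Proof.
have [cs cs_partial] : exists cs : nat -> G -> {fset G},
    forall r, partial_partition r (cs r) /\ agree_on r (cs r) (cs r.+1).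
  apply: konig.
  - by move=> r c c' ecc' g gr; rewrite ecc'.
  - by move=> r c1 c2 c3 e12 e23 g gr; rewrite e12 ?e23.
  - move=> r c cr g gr.
    have [gc cardc boundc eqc] := cr g (fsubsetP (initial_segment_mono (leqnSn r)) _ gr).
    by split=> // g' z g'r; apply: eqc; apply: (fsubsetP (initial_segment_mono (leqnSn r))).
  - exact: partial_partition_finite.
  - exact: partial_partition_exists.
pose rank (g : G) := (choice.pickle g).+1.
have cs_agree r s : r <= s -> agree_on r (cs r) (cs s).
  move=> /subnK <-; elim: (s - r) => [|k IH] g gr //.
  rewrite IH // addSn (cs_partial (k + r)%N).2 //.
  exact: (fsubsetP (initial_segment_mono (leq_addl k r))).
have cs_rank g r : rank g <= r -> cs (rank g) g = cs r g.
  by move=> le; apply: cs_agree le _ (initial_segment_pickle g).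
exists (fun g => cs (rank g) g).
have csP g := (cs_partial (rank g)).1 g (initial_segment_pickle g).
split.
- by move=> g; case: (csP g).
- by move=> g; case: (csP g).
- move=> g g' z; set r := maxn (rank g) (rank g').
  rewrite (cs_rank g r (leq_maxl _ _)) (cs_rank g' r (leq_maxr _ _)) => z1 z2.
  have rank_r g1 : rank g1 <= r -> g1 \in initial_segment r.
    by move=> le; apply: (fsubsetP (initial_segment_mono le)); apply: initial_segment_pickle.
  have [_ _ _ eqc] := (cs_partial r).1 g (rank_r g (leq_maxl _ _)).
  exact: eqc (rank_r g' (leq_maxr _ _)) z1 z2.
- by move=> g; case: (csP g).
Qed.

End Compactness.

Lemma bounded_partition_exists (G : countType) (mul : G -> G -> G) (one : G) (inv : G -> G)
    (S : {fset G}) : is_group mul one inv -> one \in S ->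
  exists n K P, bounded_partition mul inv n K P /\ #|` S| <= n.
Proof.
move=> groupG S1; set S' := S `|` [fset inv s | s in S].
have S'_inv s : s \in S' -> inv s \in S'.
  case/fsetUP=> [sS|/imfsetP[t tS ->]]; apply/fsetUP; last by left; rewrite (invgK groupG).
  by right; apply/imfsetP; exists s.
have SS' : S `<=` ball mul one S' 1.
  by apply/fsubsetP => s sS; apply: (ball1 groupG); rewrite inE sS.
have [[D stable]|unstable] := classic (exists D, ball mul one S' D.+1 `<=` ball mul one S' D).
  set H := ball mul one S' D.
  exists #|` H|, H, (fun g => [fset mul g x | x in H]); split.
    apply: (@coset_partition _ _ _ _ groupG H).
    - exact: ball_one.
    - exact: (ball_stable_mul groupG stable).
    - exact: (ball_inv groupG S'_inv).
  by apply/fsubset_leq_card/(fsubset_trans SS')/ball_stable.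
have n_gt0 : 0 < #|` S| by rewrite cardfs_gt0; apply/fset0Pn; exists one.
have unstable' D : ~ ball mul one S' D.+1 `<=` ball mul one S' D.
  by move=> stable; apply: unstable; exists D.
have local := local_partition_unbounded groupG S'_inv n_gt0 unstable'.
have [P partP] := partition_of_local_partitions groupG local.
by exists #|` S|, (ball mul one S' (#|` S| + #|` S|)), P.
Qed.

Theorem corollary6p3 (G : countType) (mul : G -> G -> G) (one : G) (inv : G -> G) :
  is_group mul one inv ->
  forall F : {fset G},
    exists (k : nat) (T : 'I_k.+1 -> {fset G}),
      fair_polytile mul one T /\ F `<=` T ord0.
Proof.
move=> groupG F.
have [n [K [P [partP cardS]]]] := bounded_partition_exists groupG (fset1U1 one F).
have [K' [P' [partP' FP']]] := partition_with_piece partP (fset1U1 one F) cardS.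
have [k [T [fairT T0]]] := fair_polytile_of_partition groupG partP'.
by exists k, T; rewrite T0; split=> //; apply: fsubset_trans FP'; apply: fsubsetU1.
Qed.
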